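(* Let $\Sigma$ be an $(m,n)$-multirate system with harmonic transfer function $\mathcal G$, let $\mathcal A:=\mathcal T_{m\overline n}(A)$, and for $z\in\rho_{m\overline n}(\mathcal A)$ denote by $G_k(z)$ the operator in row $k$ and column $0$ of the $m\times n$ block operator matrix $\mathcal G(z)$. \begin{enumerate} \item With $\epsilon:=e^{2\pi j/(m\overline n)}$, for every $z\in\rho_{m\overline n}(\mathcal A)$ the entry of $\mathcal G(z)$ in row $k$ and column $\ell$ ($0\le k<m$, $0\le \ell<n$) equals $G_{(k-\ell)\bmod m}(z/\epsilon^\ell)$. \item Suppose $\Sigma$ is also $(\widetilde m,\widetilde n)$-multirate, where $\widetilde m=\widetilde c\,\overline m$, $\widetilde n=\widetilde c\,\overline n$ with $q:=c/\widetilde c\in\mathbb Z^+$ (i.e. the operators $A_t,B_t,C_t,D_t$ are $\widetilde m\overline n$-periodic), and let $\widetilde{\mathcal G}$ be the harmonic transfer function of $\Sigma$ regarded as an $(\widetilde m,\widetilde n)$-multirate system, defined on $\rho_{\widetilde m\overline n}(\widetilde{\mathcal A})$ with $\widetilde{\mathcal A}:=\mathcal T_{\widetilde m\overline n}(A)$. Then $\rho_{m\overline n}(\mathcal A)\subset\rho_{\widetilde m\overline n}(\widetilde{\mathcal A})$, and for all $z\in\rho_{m\overline n}(\mathcal A)$ we have $\mathcal G(z)\uparrow_q=\uparrow_q\widetilde{\mathcal G}(z)$ and in particular $\widetilde{\mathcal G}(z)=\downarrow_q\mathcal G(z)\uparrow_q$. \end{enumerate}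
   Context: $j$ is the imaginary unit; $U,X,Y$ are separable complex Hilbert spaces. Upsampler $(\uparrow_q v)_t=v_{t/q}$ if $q\mid t$, else $0$; downsampler $(\downarrow_q v)_t=v_{qt}$; on finite columns $\uparrow_q:V^N\to V^{qN}$ places entries at positions $0,q,2q,\dots$ (zeros elsewhere) and $\downarrow_q:V^{qN}\to V^N$ keeps positions $0,q,2q,\dots$. For $m,n\in\mathbb Z^+$, $c=\gcd(m,n)$, $\overline m=m/c$, $\overline n=n/c$. An $(m,n)$-multirate system consists of $m\overline n$-periodic bounded operator sequences $A_t:X\to X$, $B_t:U\to X$, $C_t:X\to Y$, $D_t:U\to Y$ with equations $x_{t+1}=A_tx_t+B_tu^\circ_t$, $y^\circ_t=C_tx_t+D_tu^\circ_t$, $u^\circ=\uparrow_{\overline m}u$, $y=\downarrow_{\overline n}y^\circ$. For a $T$-periodic sequence $A_t$: $\widehat A_k=\frac1T\sum_{t=0}^{T-1}A_te^{-2\pi jtk/T}$; $\mathcal T_T(A)$ is the $T\times T$ block matrix with entry $\widehat A_{(r-\ell)\bmod T}$ in row $r$, column $\ell$. $\mathcal N_T:=\mathrm{diag}(e^{2\pi jk/T}I)_{k=0}^{T-1}$, $\rho_T(\mathcal A):=\{z: \mathcal N_T-z\mathcal A$ has a bounded inverse$\}$. $\Pi_{T,1,q}:V^T\to V^{qT}$ stacks $q$ copies: $(\Pi_{T,1,q}v)_{t+kT}=v_t$; $\Pi_{T,1,q}^*:V^{qT}\to V^T$, $(\Pi^*_{T,1,q}v)_t=\sum_{k=0}^{q-1}v_{t+kT}$.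 The harmonic transfer function of an $(m,n)$-multirate system is, for $z\in\rho_{m\overline n}(\mathcal T_{m\overline n}(A))$, $\mathcal G(z):=\Pi_{m,1,\overline n}^*\big(z\mathcal C(\mathcal N_{m\overline n}-z\mathcal A)^{-1}\mathcal B+\mathcal D\big)\Pi_{n,1,\overline m}/\overline m:U^n\to Y^m$, where $\mathcal A,\mathcal B,\mathcal C,\mathcal D$ are the Toeplitz transforms with period $m\overline n$ of $A,B,C,D$. For the $(\widetilde m,\widetilde n)$ version, all $m,n$ are replaced by $\widetilde m,\widetilde n$ and the period $m\overline n$ by $\widetilde m\overline n$. *)

From mathcomp Require Import all_boot all_algebra.
From mathcomp Require Import all_classical all_reals all_analysis.
From mathcomp Require Import complex.
From Stdlib Require Import ClassicalEpsilon.
Import GRing.Theory Num.Theory.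
Local Open Scope ring_scope.
Local Open Scope complex_scope.

Set Implicit Arguments.
Unset Strict Implicit.
Unset Printing Implicit Defensive.

Definition expi {R : realType} (th : R) : R[i] := cos th +i* sin th.

Definition inner_product {R : realType} {V : normedModType R[i]}
  (ip : V -> V -> R[i]) : Prop :=
  (forall (a : R[i]) (x y z : V), ip (a *: x + y) z = a * ip x z + ip y z) /\
  (forall x y : V, ip y x = (ip x y)^*) /\
  (forall x : V, ip x x = `|x| ^+ 2).

Definition separable {R : realType} (V : normedModType R[i]) : Prop :=
  exists d : nat -> V, dense (range d).

Definition bounded_op {R : realType} {V W : normedModType R[i]} (f : V -> W) : Prop :=
  (forall (a : R[i]) (x y : V), f (a *: x + y) = a *: f x + f y) /\
  exists M : R, forall x : V, `|f x| <= M%:C * `|x|.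

(* finite columns V^T are functions 'I_T -> V; a bounded operator V^T -> W^S
   (norm on V^T: sum of the norms of the entries; all such norms are equivalent) *)
Definition bounded_blockop {R : realType} {V W : normedModType R[i]} {T S : nat}
  (F : ('I_T -> V) -> ('I_S -> W)) : Prop :=
  (forall (a : R[i]) (v w : 'I_T -> V),
      F (fun i => a *: v i + w i) = (fun j => a *: F v j + F w j)) /\
  exists M : R, forall (v : 'I_T -> V) (j : 'I_S), `|F v j| <= M%:C * \sum_(i < T) `|v i|.

(* entry i of a column v (0 if i is out of range) *)
Definition vat {V : zmodType} {T : nat} (v : 'I_T -> V) (i : nat) : V :=
  oapp v 0 (insub i : option 'I_T).

Definition periodic {V : Type} (P : nat) (A : nat -> V) : Prop :=
  forall t, A (t + P) = A t.

Definition fourier {R : realType} {V W : normedModType R[i]} (T : nat)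
  (A : nat -> V -> W) (k : nat) : V -> W :=
  fun x => (T%:R)^-1 *: \sum_(t < T) expi (- (2 * pi * (t * k)%:R / T%:R)) *: A t x.

Definition toeplitz {R : realType} {V W : normedModType R[i]} (T : nat)
  (A : nat -> V -> W) : ('I_T -> V) -> ('I_T -> W) :=
  fun v r => \sum_(l < T) fourier T A ((r + T - l) %% T)%N (v l).

Definition pencil {R : realType} {X : normedModType R[i]} (T : nat)
  (Aop : ('I_T -> X) -> ('I_T -> X)) (z : R[i]) : ('I_T -> X) -> ('I_T -> X) :=
  fun v r => expi (2 * pi * (val r)%:R / T%:R) *: v r - z *: Aop v r.

Definition is_bdd_inverse {R : realType} {X : normedModType R[i]} (T : nat)
  (Aop : ('I_T -> X) -> ('I_T -> X)) (z : R[i]) (Rinv : ('I_T -> X) -> ('I_T -> X)) : Prop :=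
  bounded_blockop Rinv /\
  (forall v, pencil Aop z (Rinv v) = v) /\ (forall v, Rinv (pencil Aop z v) = v).

Definition rho {R : realType} {X : normedModType R[i]} (T : nat)
  (Aop : ('I_T -> X) -> ('I_T -> X)) : set R[i] :=
  [set z | exists Rinv, is_bdd_inverse Aop z Rinv].

(* (N_T - z Aop)^{-1} (meaningful for z in rho T Aop, where it is unique) *)
Definition resolvent {R : realType} {X : normedModType R[i]} (T : nat)
  (Aop : ('I_T -> X) -> ('I_T -> X)) (z : R[i]) : ('I_T -> X) -> ('I_T -> X) :=
  epsilon (inhabits (fun v => v)) (is_bdd_inverse Aop z).

(* Pi_{N,1,q} : V^N -> V^{qN} (target size M = qN) *)
Definition Pi_stack {V : zmodType} {N M : nat} (v : 'I_N -> V) : 'I_M -> V :=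
  fun i => vat v (i %% N)%N.

Definition Pi_adj {V : zmodType} {N M : nat} (q : nat) (w : 'I_M -> V) : 'I_N -> V :=
  fun t => \sum_(k < q) vat w (t + k * N)%N.

Definition upsample {V : zmodType} {N M : nat} (q : nat) (v : 'I_N -> V) : 'I_M -> V :=
  fun i => if (q %| i)%N then vat v (i %/ q)%N else 0.

Definition downsample {V : zmodType} {N M : nat} (q : nat) (w : 'I_M -> V) : 'I_N -> V :=
  fun i => vat w (q * i)%N.

Definition delta {V : zmodType} {N : nat} (l : nat) (u : V) : 'I_N -> V :=
  fun i => if val i == l then u else 0.

Definition mbar (m n : nat) : nat := (m %/ gcdn m n)%N.
Definition nbar (m n : nat) : nat := (n %/ gcdn m n)%N.

Definition multirate_system {R : realType} {U X Y : normedModType R[i]} (m n : nat)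
  (A : nat -> X -> X) (B : nat -> U -> X) (C : nat -> X -> Y) (D : nat -> U -> Y) : Prop :=
  (0 < m)%N /\ (0 < n)%N /\
  periodic (m * nbar m n)%N A /\ periodic (m * nbar m n)%N B /\
  periodic (m * nbar m n)%N C /\ periodic (m * nbar m n)%N D /\
  (forall t, bounded_op (A t)) /\ (forall t, bounded_op (B t)) /\
  (forall t, bounded_op (C t)) /\ (forall t, bounded_op (D t)).

Definition HTF {R : realType} {U X Y : normedModType R[i]} (m n : nat)
  (A : nat -> X -> X) (B : nat -> U -> X) (C : nat -> X -> Y) (D : nat -> U -> Y)
  (z : R[i]) (u : 'I_n -> U) : 'I_m -> Y :=
  let P := (m * nbar m n)%N in
  let Pu : 'I_P -> U := Pi_stack u in
  let w : 'I_P -> Y := fun r =>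
    z *: toeplitz C (resolvent (toeplitz A) z (toeplitz B Pu)) r + toeplitz D Pu r in
  fun k => ((mbar m n)%:R)^-1 *: Pi_adj (nbar m n) w k.
Arguments HTF {R U X Y} m n A B C D z u _.

From Pilot Require Import Defs.
From mathcomp Require Import all_boot all_algebra.
From mathcomp Require Import all_classical all_reals all_analysis.
From mathcomp Require Import complex.
From mathcomp Require Import ring lra.
From Stdlib Require Import ClassicalEpsilon.
Import order.Order.TTheory GRing.Theory Num.Theory.
Local Open Scope ring_scope.
Local Open Scope complex_scope.

Set Implicit Arguments.
Unset Strict Implicit.
Unset Printing Implicit Defensive.

(* Write P = m * nbar m n and eps = e^{2 pi j / P}. Cyclically shifting a column of
   length P by a commutes with every Toeplitz operator T_P(.) and turns N_P into
   eps^a N_P, so it conjugates N_P - z A into eps^a (N_P - (z / eps^a) A); as the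
   stacked input of delta_l u is the shift by l of that of delta_0 u, part 1 follows.
   For part 2, if the coefficients are Pt-periodic and P = q Pt, orthogonality of the
   q-th roots of unity makes the period-P Fourier coefficient of index k vanish unless
   q | k, when it is the period-Pt coefficient of index k / q. Hence T_P(.) and
   N_P - z A map upsampled columns to upsampled columns, and commute with the
   projection on the multiples of q; this transfers invertibility from period P to
   period Pt and makes the resolvent, like the stacking maps Pi and Pi^*, commute with
   upsampling. *)

Section BigSums.
Variable V : zmodType.

Lemma sum_ord_mul (q N : nat) (g : nat -> V) :
  \sum_(t < q * N) g t = \sum_(s < q) \sum_(t < N) g (s * N + t)%N.
Proof.
elim: q => [|q IH]; first by rewrite mul0n !big_ord0.
by rewrite mulSnr big_split_ord /= IH big_ord_recr.
Qed.

Lemma sum_modn_eq (m N k : nat) (g : nat -> V) : (k < m)%N ->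
  \sum_(s < N) g (k + s * m)%N = \sum_(r < m * N) (if (r %% m == k)%N then g r else 0).
Proof.
move=> km; rewrite mulnC (sum_ord_mul N m (fun r => if (r %% m == k)%N then g r else 0)).
apply: eq_bigr => s _.
transitivity (\sum_(t < m) (if t == k :> nat then g (s * m + t)%N else 0)).
  by rewrite -big_mkcond (big_ord1_eq _ (fun t => g (s * m + t)%N)) km addnC.
by apply: eq_bigr => t _; rewrite modnMDl modn_small.
Qed.

Lemma sum_dvdn_eq (M d N : nat) (g : nat -> V) : (0 < d)%N -> M = (d * N)%N ->
  \sum_(r < M) (if (d %| r)%N then g r else 0) = \sum_(j < N) g (j * d)%N.
Proof. by move=> d_gt0 ->; symmetry; exact: (sum_modn_eq N g d_gt0). Qed.

Lemma sum_rotate (P a : nat) (h : nat -> V) : (0 < P)%N ->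
  \sum_(i < P) h ((i + a) %% P)%N = \sum_(i < P) h i.
Proof.
move=> P_gt0; pose f (i : 'I_P) := Ordinal (ltn_pmod (i + a) P_gt0).
have f_inj : injective f.
  move=> i j /(congr1 val) /= /eqP; rewrite eqn_modDr => /eqP.
  by rewrite !modn_small // => /val_inj.
by rewrite [RHS](reindex_inj f_inj).
Qed.

End BigSums.

Section Indices.
Local Open Scope nat_scope.

Lemma modnB_congr (P x y x' y' : nat) : y <= x + P -> y' <= x' + P ->
  x = x' %[mod P] -> y = y' %[mod P] -> x + P - y = x' + P - y' %[mod P].
Proof.
move=> le_y le_y' ex ey; apply/eqP; rewrite -(eqn_modDr y) subnK //.
have -> : (x' + P - y' + y) %% P = (x' + P - y' + y') %% P by rewrite -modnDmr ey modnDmr.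
by rewrite subnK //; apply/eqP; rewrite -modnDml ex modnDml.
Qed.

Lemma modnDB_shift (P r l a : nat) : 0 < P -> l < P ->
  ((r + a) %% P + P - (l + a) %% P) %% P = (r + P - l) %% P.
Proof.
move=> P_gt0 lP; rewrite (@modnB_congr P _ _ (r + a) (l + a)) ?modn_mod //.
- by rewrite -addnA [a + P]addnC addnA subnDr.
- by rewrite (leq_trans (ltnW (ltn_pmod _ P_gt0))) // leq_addl.
- by rewrite addnAC leq_add2r (leq_trans (ltnW lP)) // leq_addl.
Qed.

Lemma modnD_eq_small (n r l : nat) : l < n -> ((r + l) %% n == l) = (r %% n == 0).
Proof. by move=> ln; rewrite -{2}(modn_small ln) -[X in _ == X %% n]add0n eqn_modDr mod0n. Qed.

Lemma ltn_addmul (k m s N : nat) : k < m -> s < N -> k + s * m < m * N.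
Proof.
move=> km sN; apply: (@leq_trans (s.+1 * m)); first by rewrite mulSnr addnC ltn_add2l.
by rewrite mulnC leq_mul2l sN orbT.
Qed.

Lemma divn_modnB_mul (d N M r j : nat) : 0 < d -> d %| r -> M = d * N -> j < N ->
  ((r + M - j * d) %% M) %/ d = (r %/ d + N - j) %% N.
Proof.
move=> d_gt0 d_dvd_r -> jN; rewrite -{1}(divnK d_dvd_r) [d * N]mulnC -mulnDl -mulnBl.
by rewrite -muln_modl mulnK.
Qed.

Lemma dvdn_modn (q P x : nat) : q %| P -> (q %| x %% P) = (q %| x).
Proof. by move=> qP; rewrite /dvdn modn_dvdm. Qed.

Lemma dvdn_modnB_l (d M r l : nat) : d %| M -> l <= r + M -> d %| r ->
  (d %| (r + M - l) %% M) = (d %| l).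
Proof. by move=> dM le_l dr; rewrite dvdn_modn // dvdn_subr // dvdn_add. Qed.

Lemma dvdn_modnB_r (d M r l : nat) : d %| M -> l <= r + M -> d %| l ->
  (d %| (r + M - l) %% M) = (d %| r).
Proof. by move=> dM le_l dl; rewrite dvdn_modn // dvdn_subl // dvdn_addl. Qed.

End Indices.

Section RateIndices.
Local Open Scope nat_scope.

Lemma nbar_gt0 (m n : nat) : 0 < n -> 0 < nbar m n.
Proof.
by move=> n_gt0; rewrite divn_gt0 ?gcdn_gt0 ?n_gt0 ?orbT // dvdn_leq // dvdn_gcdr.
Qed.

Lemma dvdn_period (m n : nat) : n %| m * nbar m n.
Proof. by rewrite /nbar muln_divCA_gcd dvdn_mulr. Qed.

Lemma period_gt0 (m n : nat) : 0 < m -> 0 < n -> 0 < m * nbar m n.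
Proof. by move=> m_gt0 n_gt0; rewrite muln_gt0 m_gt0 nbar_gt0. Qed.

Lemma leq_period (m n l : nat) : 0 < m -> l < n -> l <= m * nbar m n.
Proof.
move=> m_gt0 ln; have n_gt0 : 0 < n by apply: leq_ltn_trans ln.
by rewrite ltnW // (leq_trans ln) // dvdn_leq ?dvdn_period ?period_gt0.
Qed.

Lemma mbar_mull (q m n : nat) : 0 < q -> mbar (q * m) (q * n) = mbar m n.
Proof. by move=> q_gt0; rewrite /mbar -muln_gcdr divnMl. Qed.

Lemma nbar_mull (q m n : nat) : 0 < q -> nbar (q * m) (q * n) = nbar m n.
Proof. by move=> q_gt0; rewrite /nbar -muln_gcdr divnMl. Qed.

End RateIndices.

Section ComplexExponential.
Variable R : realType.
Implicit Types a b th : R.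

Lemma expiD a b : expi (a + b) = expi a * expi b.
Proof.
rewrite /expi cosD sinD; apply/eqP; rewrite eq_complex /=.
by apply/andP; split; apply/eqP; ring.
Qed.

Lemma expi0 : expi (0 : R) = 1.
Proof. by rewrite /expi cos0 sin0. Qed.

Lemma expiX a k : expi a ^+ k = expi (a * k%:R).
Proof.
elim: k => [|k IH]; first by rewrite mulr0 expi0 expr0.
by rewrite exprS IH -expiD -[k.+1]addn1 natrD mulrDr mulr1 addrC.
Qed.

Lemma expi_2pi_nat k : expi (2 * pi * k%:R : R) = 1.
Proof. by rewrite -expiX /expi mulr_natl cos2pi sin2pi expr1n. Qed.

Lemma expiN_2pi_nat k : expi (- (2 * pi * k%:R) : R) = 1.
Proof. by have := expiD (2 * pi * k%:R) (- (2 * pi * k%:R)); rewrite subrr expi0 expi_2pi_nat mul1r. Qed.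

Lemma normc_expi a : `|expi a| = 1.
Proof. by rewrite normc_def /= cos2Dsin2 sqrtr1. Qed.

Lemma expi_neq0 a : expi a != 0.
Proof. by rewrite -normr_eq0 normc_expi oner_eq0. Qed.

Lemma cos_neq1 th : 0 < th < pi *+ 2 -> cos th != 1.
Proof.
move=> /andP[th_gt0 th_lt2pi]; apply/eqP => cos1.
have sin_half_gt0 : 0 < sin (th / 2).
  by apply: sin_gt0_pi; rewrite divr_gt0 //= ltr_pdivrMr // mulr_natr.
have : sin (th / 2) ^+ 2 = 0.
  have th2 : th = (th / 2) *+ 2 by rewrite -mulr_natr divfK // pnatr_eq0.
  by move: cos1; rewrite {1}th2 cos_mulr2n cos2sin2; lra.
by move/eqP; rewrite sqrf_eq0 => /eqP sin0; rewrite sin0 ltxx in sin_half_gt0.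
Qed.

Lemma expiN_neq1 th : 0 < th < pi *+ 2 -> expi (- th) != 1.
Proof.
move=> /cos_neq1; apply: contra => /eqP.
by rewrite /expi cosN => /eqP; rewrite eq_complex /= => /andP[].
Qed.

Lemma expi_2pi_modn (P x : nat) : (0 < P)%N ->
  expi (2 * pi * (x %% P)%:R / P%:R : R) = expi (2 * pi * x%:R / P%:R).
Proof.
move=> P_gt0; have PR : (P%:R : R) != 0 by rewrite pnatr_eq0 -lt0n.
rewrite [in RHS](divn_eq x P) natrD natrM.
have -> : 2 * pi * ((x %/ P)%:R * P%:R + (x %% P)%:R) / P%:R =
  2 * pi * (x %/ P)%:R + 2 * pi * (x %% P)%:R / P%:R :> R by field.
by rewrite expiD expi_2pi_nat mul1r.
Qed.

Lemma expi_2pi_addn_modn (P r a : nat) : (0 < P)%N ->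
  expi (2 * pi * ((r + a) %% P)%:R / P%:R : R) =
  expi (2 * pi / P%:R : R) ^+ a * expi (2 * pi * r%:R / P%:R).
Proof.
move=> P_gt0; have PR : (P%:R : R) != 0 by rewrite pnatr_eq0 -lt0n.
by rewrite expi_2pi_modn // expiX -expiD natrD; congr expi; field.
Qed.

Lemma sum_expr_eq0 (w : R[i]) (q : nat) : w ^+ q = 1 -> w != 1 -> \sum_(s < q) w ^+ s = 0.
Proof.
move=> wq1 w_neq1; apply/eqP; move: (subrX1 w q); rewrite wq1 subrr => /esym/eqP.
by rewrite mulf_eq0 subr_eq0 (negbTE w_neq1).
Qed.

Lemma sum_unity_root_powers (q k : nat) : (0 < q)%N ->
  \sum_(s < q) expi (- (2 * pi * k%:R / q%:R) : R) ^+ s = if (q %| k)%N then q%:R else 0.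
Proof.
move=> q_gt0; have qR : (q%:R : R) != 0 by rewrite pnatr_eq0 -lt0n.
set w := expi _; case: ifP => q_dvd_k.
  have -> : w = 1 by rewrite /w -(divnK q_dvd_k) natrM mulrA mulfK // expiN_2pi_nat.
  by rewrite (eq_bigr (fun _ => 1)) ?sumr_const ?card_ord // => s _; rewrite expr1n.
apply: sum_expr_eq0; first by rewrite /w expiX mulNr divfK // expiN_2pi_nat.
have -> : w = expi (- (2 * pi * (k %% q)%:R / q%:R)).
  rewrite /w {1}(divn_eq k q) natrD natrM.
  have -> : - (2 * pi * ((k %/ q)%:R * q%:R + (k %% q)%:R) / q%:R) =
      - (2 * pi * (k %/ q)%:R) + - (2 * pi * (k %% q)%:R / q%:R) :> R by field.
  by rewrite expiD expiN_2pi_nat mul1r.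
have kq_gt0 : (0 < k %% q)%N by rewrite lt0n -/(dvdn q k) q_dvd_k.
apply: expiN_neq1; rewrite divr_gt0 ?mulr_gt0 ?pi_gt0 ?ltr0n //=.
have -> : pi *+ 2 = 2 * pi :> R by rewrite mulr_natl.
rewrite ltr_pdivrMr ?ltr0n // ltr_pM2l ?mulr_gt0 ?pi_gt0 ?ltr0n //.
by rewrite ltr_nat ltn_pmod.
Qed.

End ComplexExponential.

Section ColumnEntries.
Variable V : zmodType.

Lemma vat_ltn (T i : nat) (v : 'I_T -> V) (lt_iT : (i < T)%N) : vat v i = v (Ordinal lt_iT).
Proof. by rewrite /vat insubT. Qed.

Lemma vat_ord (T : nat) (v : 'I_T -> V) (i : 'I_T) : vat v i = v i.
Proof. by rewrite (vat_ltn v (ltn_ord i)); congr v; apply: val_inj. Qed.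

Lemma vat_geq (T i : nat) (v : 'I_T -> V) : (T <= i)%N -> vat v i = 0.
Proof. by move=> le_Ti; rewrite /vat insubF // ltnNge le_Ti. Qed.

Definition rot (P a : nat) (v : 'I_P -> V) : 'I_P -> V := fun r => vat v ((r + a) %% P).

Lemma rotD (P a b : nat) (v : 'I_P -> V) : (0 < P)%N -> rot a (rot b v) = rot (a + b) v.
Proof.
move=> P_gt0; apply: funext => r; rewrite /rot (vat_ltn _ (ltn_pmod _ P_gt0)) /=.
by rewrite modnDml addnA.
Qed.

Lemma rot_period (P : nat) (v : 'I_P -> V) : rot P v = v.
Proof. by apply: funext => r; rewrite /rot modnDr modn_small ?vat_ord. Qed.

Lemma sum_rot (W : zmodType) (F : V -> W) (P a : nat) (v : 'I_P -> V) : (0 < P)%N ->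
  \sum_(i < P) F (rot a v i) = \sum_(i < P) F (v i).
Proof.
move=> P_gt0; rewrite /rot (sum_rotate a (fun j => F (vat v j)) P_gt0).
by apply: eq_bigr => i _; rewrite vat_ord.
Qed.

Lemma Pi_stack_delta_rot (n P : nat) (l : 'I_n) (u : V) :
  (n %| P)%N -> (0 < P)%N ->
  rot l (Pi_stack (M:=P) (delta (N:=n) l u)) = Pi_stack (delta (N:=n) 0 u).
Proof.
move=> nP P_gt0; have n_gt0 : (0 < n)%N by apply: leq_ltn_trans (ltn_ord l).
apply: funext => r; rewrite /rot (vat_ltn _ (ltn_pmod _ P_gt0)) /Pi_stack /=.
rewrite (vat_ltn _ (ltn_pmod _ n_gt0)) (vat_ltn _ (ltn_pmod _ n_gt0)) /delta /=.
by rewrite modn_dvdm // modnD_eq_small.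
Qed.

Lemma Pi_adj_rot (m Nb l : nat) (w : 'I_(m * Nb) -> V) (k : 'I_m) : (0 < Nb)%N ->
  Pi_adj (N:=m) Nb w k = vat (Pi_adj (N:=m) Nb (rot l w)) ((k + m * l - l) %% m).
Proof.
move=> Nb_gt0; have m_gt0 : (0 < m)%N by apply: leq_ltn_trans (ltn_ord k).
have P_gt0 : (0 < m * Nb)%N by rewrite muln_gt0 m_gt0.
rewrite (vat_ltn _ (ltn_pmod _ m_gt0)) /Pi_adj /=.
rewrite (sum_modn_eq Nb (vat w) (ltn_ord k)) (sum_modn_eq Nb (vat (rot l w)) (ltn_pmod _ m_gt0)).
rewrite -(sum_rotate l (fun j => if (j %% m == k)%N then vat w j else 0) P_gt0).
apply: eq_bigr => r _; rewrite vat_ord /rot modn_dvdm ?dvdn_mulr //.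
have le_l : (l <= k + m * l)%N by rewrite (leq_trans (leq_pmull l m_gt0)) // leq_addl.
by rewrite -(eqn_modDr l) subnK // -(modnDmr k (m * l)) modnMr addn0 (modn_small (ltn_ord k)).
Qed.

Definition projq (P q : nat) (v : 'I_P -> V) : 'I_P -> V :=
  fun r => if (q %| r)%N then v r else 0.

Lemma downsample_upsample (N M q : nat) (v : 'I_N -> V) : (0 < q)%N -> (N * q <= M)%N ->
  downsample q (upsample (M:=M) q v) = v.
Proof.
move=> q_gt0 NM; apply: funext => i; rewrite /downsample.
have lt_qi : (q * i < M)%N by rewrite (leq_trans _ NM) // mulnC ltn_pmul2r.
by rewrite (vat_ltn _ lt_qi) /upsample /= dvdn_mulr // mulKn // vat_ord.
Qed.

Lemma upsample_downsample (N M q : nat) (v : 'I_M -> V) : (0 < q)%N -> (M <= N * q)%N ->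
  upsample q (downsample (N:=N) q v) = projq q v.
Proof.
move=> q_gt0 MN; apply: funext => r; rewrite /upsample /projq; case: ifP => // qr.
have lt_rq : (r %/ q < N)%N by rewrite ltn_divLR // (leq_trans _ MN) ?ltn_ord.
by rewrite (vat_ltn _ lt_rq) /downsample /= mulnC divnK // vat_ord.
Qed.

Lemma sum_upsample (W : zmodType) (F : V -> W) (M N q : nat) (v : 'I_N -> V) :
  (0 < q)%N -> M = (q * N)%N -> F 0 = 0 ->
  \sum_(i < M) F (upsample q v i) = \sum_(i < N) F (v i).
Proof.
move=> q_gt0 MqN F0.
transitivity (\sum_(i < M) (if (q %| i)%N then F (vat v (i %/ q)) else 0)).
  by apply: eq_bigr => i _; rewrite /upsample; case: ifP.
rewrite (sum_dvdn_eq (fun i => F (vat v (i %/ q))) q_gt0 MqN).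
by apply: eq_bigr => j _; rewrite mulnK // vat_ord.
Qed.

End ColumnEntries.

Section ColumnScaling.
Variables (K : pzRingType) (V : lmodType K).

Lemma vat_linearP (T j : nat) c (v w : 'I_T -> V) :
  vat (fun i => c *: v i + w i) j = c *: vat v j + vat w j.
Proof.
case: (ltnP j T) => jT; first by rewrite !(vat_ltn _ jT).
by rewrite !vat_geq // scaler0 addr0.
Qed.

Lemma vatZ (T j : nat) c (v : 'I_T -> V) : vat (fun i => c *: v i) j = c *: vat v j.
Proof.
case: (ltnP j T) => jT; first by rewrite !(vat_ltn _ jT).
by rewrite !vat_geq // scaler0.
Qed.

Lemma rot_linearP (P a : nat) c (v w : 'I_P -> V) :
  rot a (fun i => c *: v i + w i) = (fun r => c *: rot a v r + rot a w r).
Proof. by apply: funext => r; rewrite /rot vat_linearP. Qed.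

Lemma rotZ (P a : nat) c (v : 'I_P -> V) : rot a (fun i => c *: v i) = (fun r => c *: rot a v r).
Proof. by apply: funext => r; rewrite /rot vatZ. Qed.

Lemma upsample_linearP (N M q : nat) c (v w : 'I_N -> V) :
  upsample (M:=M) q (fun i => c *: v i + w i) =
  (fun r => c *: upsample q v r + upsample q w r).
Proof.
apply: funext => r; rewrite /upsample; case: ifP => _; first by rewrite vat_linearP.
by rewrite scaler0 addr0.
Qed.

Lemma upsampleZ (N M q : nat) c (v : 'I_N -> V) :
  upsample (M:=M) q (fun i => c *: v i) = (fun r => c *: upsample q v r).
Proof.
apply: funext => r; rewrite /upsample; case: ifP => _; first by rewrite vatZ.
by rewrite scaler0.
Qed.

Lemma downsample_linearP (N M q : nat) c (v w : 'I_M -> V) :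
  downsample (N:=N) q (fun i => c *: v i + w i) =
  (fun r => c *: downsample q v r + downsample q w r).
Proof. by apply: funext => r; rewrite /downsample vat_linearP. Qed.

Lemma linear_fun0 (W : lmodType K) (f : V -> W) : linear f -> f 0 = 0.
Proof. by move=> f_lin; rewrite -(subrr 0) (zmod_morphism_linear f_lin) subrr. Qed.

End ColumnScaling.

Lemma periodic_addmul (V : Type) (T : nat) (A : nat -> V) (s t : nat) :
  Defs.periodic T A -> A (s * T + t)%N = A t.
Proof.
move=> A_per; elim: s => [|s IH]; first by rewrite mul0n add0n.
by rewrite mulSnr -addnA [(T + t)%N]addnC addnA A_per IH.
Qed.

Section Toeplitz.
Variable R : realType.
Variables (V W : normedModType R[i]) (A : nat -> V -> W).

Lemma toeplitz_rot (P a : nat) (v : 'I_P -> V) : (0 < P)%N ->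
  toeplitz A (rot a v) = rot a (toeplitz A v).
Proof.
move=> P_gt0; apply: funext => r; rewrite /rot /toeplitz (vat_ltn _ (ltn_pmod _ P_gt0)) /=.
pose F l := fourier P A (((r + a) %% P + P - l) %% P)%N (vat v l).
transitivity (\sum_(l < P) F l); last by apply: eq_bigr => l _; rewrite /F vat_ord.
by rewrite -(sum_rotate a F P_gt0); apply: eq_bigr => l _; rewrite /F modnDB_shift.
Qed.

Hypothesis A_lin : forall t, linear (A t).

Lemma fourier_linear (T k : nat) : linear (fourier T A k).
Proof.
move=> a x y; rewrite /fourier scalerA [a * _]mulrC -scalerA -scalerDr.
congr (_ *: _); rewrite scaler_sumr -big_split /=; apply: eq_bigr => t _.
by rewrite A_lin scalerDr !scalerA mulrC.
Qed.

Lemma fourier0 (T k : nat) : fourier T A k 0 = 0.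
Proof. exact: linear_fun0 (fourier_linear T k). Qed.

Lemma toeplitzZ (T : nat) c (v : 'I_T -> V) :
  toeplitz A (fun i => c *: v i) = (fun r => c *: toeplitz A v r).
Proof.
apply: funext => r; rewrite /toeplitz scaler_sumr; apply: eq_bigr => l _.
by rewrite -[c *: v l]addr0 fourier_linear fourier0 addr0.
Qed.

End Toeplitz.

Section Resolvent.
Variables (R : realType) (X : normedModType R[i]) (T : nat).
Variable Aop : ('I_T -> X) -> ('I_T -> X).

Lemma resolvent_spec z : rho Aop z -> is_bdd_inverse Aop z (resolvent Aop z).
Proof. exact: epsilon_spec. Qed.

Lemma resolvent_pencil z b : rho Aop z -> pencil Aop z (resolvent Aop z b) = b.
Proof. by move=> /resolvent_spec [_ [pencilK _]]; apply: pencilK. Qed.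

Lemma resolvent_unique z b x : rho Aop z -> pencil Aop z x = b -> resolvent Aop z b = x.
Proof. by move=> /resolvent_spec [_ [_ resolventK]] <-; apply: resolventK. Qed.

End Resolvent.

Section Rotation.
Variables (R : realType) (X : normedModType R[i]) (P : nat).
Hypothesis P_gt0 : (0 < P)%N.
Local Notation eps := (expi (2 * pi / P%:R) : R[i]).

Lemma pencil_rot (A : nat -> X -> X) z a (x : 'I_P -> X) :
  (fun r => eps ^+ a *: pencil (toeplitz A) (z / eps ^+ a) (rot a x) r) =
  rot a (pencil (toeplitz A) z x).
Proof.
have e_neq0 : eps ^+ a != 0 by rewrite expf_neq0 // expi_neq0.
apply: funext => r; rewrite /pencil toeplitz_rot // /rot.
rewrite !(vat_ltn _ (ltn_pmod _ P_gt0)) /= expi_2pi_addn_modn //.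
by rewrite scalerBr !scalerA mulrCA divff // mulr1.
Qed.

Lemma pencilZ (A : nat -> X -> X) z c (v : 'I_P -> X) : (forall t, linear (A t)) ->
  pencil (toeplitz A) z (fun i => c *: v i) = (fun r => c *: pencil (toeplitz A) z v r).
Proof.
move=> A_lin; apply: funext => r; rewrite /pencil toeplitzZ //.
by rewrite scalerBr !scalerA mulrC [z * c]mulrC.
Qed.

Lemma rho_rot (A : nat -> X -> X) z a : (a <= P)%N ->
  rho (toeplitz (T:=P) A) z -> rho (toeplitz (T:=P) A) (z / eps ^+ a).
Proof.
move=> aP [Rinv [[Rinv_lin [M Rinv_bdd]] [pencilK RinvK]]].
set e := eps ^+ a; have e_neq0 : e != 0 by rewrite expf_neq0 // expi_neq0.
have rot_inv (V : zmodType) (v : 'I_P -> V) : rot a (rot (P - a) v) = v.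
  by rewrite rotD // subnKC // rot_period.
have rot_inv' (V : zmodType) (v : 'I_P -> V) : rot (P - a) (rot a v) = v.
  by rewrite rotD // subnK // rot_period.
exists (fun v => rot a (Rinv (fun i => e *: rot (P - a) v i))); split; [split|split].
- move=> c v w; rewrite rot_linearP.
  have -> : (fun i => e *: (c *: rot (P - a) v i + rot (P - a) w i)) =
            (fun i => c *: (e *: rot (P - a) v i) + e *: rot (P - a) w i).
    by apply: funext => i; rewrite scalerDr !scalerA mulrC.
  by rewrite Rinv_lin rot_linearP.
- exists M => v j; rewrite /rot (vat_ltn _ (ltn_pmod _ P_gt0)).
  have -> : \sum_(i < P) `|v i| = \sum_(i < P) `|e *: rot (P - a) v i|.
    under [RHS]eq_bigr do rewrite normrZ normrX normc_expi expr1n mul1r.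
    by symmetry; apply: (sum_rot (fun y : X => `|y|)).
  exact: Rinv_bdd.
- move=> v; apply: funext => r; apply: (scalerI e_neq0).
  have := congr1 (fun f => f r) (pencil_rot A z a (Rinv (fun i => e *: rot (P - a) v i))).
  by rewrite /= pencilK rotZ rot_inv.
- move=> y; have := pencil_rot A z a (rot (P - a) y); rewrite rot_inv => pencil_y.
  by rewrite -rotZ pencil_y rot_inv' RinvK rot_inv.
Qed.

Lemma resolvent_rot (A : nat -> X -> X) z a (b : 'I_P -> X) : (a <= P)%N ->
  (forall t, linear (A t)) -> rho (toeplitz (T:=P) A) z ->
  resolvent (toeplitz A) (z / eps ^+ a) (rot a b) =
  (fun i => eps ^+ a *: rot a (resolvent (toeplitz A) z b) i).
Proof.
move=> aP A_lin hz; apply: resolvent_unique; first exact: rho_rot.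
by rewrite pencilZ // pencil_rot resolvent_pencil.
Qed.

End Rotation.

Section HarmonicShift.
Variables (R : realType) (U X Y : normedModType R[i]) (m n : nat).
Variables (A : nat -> X -> X) (B : nat -> U -> X) (C : nat -> X -> Y) (D : nat -> U -> Y).
Hypotheses (A_lin : forall t, linear (A t)) (C_lin : forall t, linear (C t)).
Local Notation P := (m * nbar m n)%N.
Local Notation eps := (expi (2 * pi / P%:R) : R[i]).

Lemma HTF_delta z (k : 'I_m) (l : 'I_n) (u : U) : rho (toeplitz (T:=P) A) z ->
  HTF m n A B C D z (delta l u) k =
  vat (HTF m n A B C D (z / eps ^+ l) (delta 0 u)) ((k + m * l - l) %% m).
Proof.
move=> hz; have n_gt0 : (0 < n)%N by apply: leq_ltn_trans (ltn_ord l).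
have m_gt0 : (0 < m)%N by apply: leq_ltn_trans (ltn_ord k).
have P_gt0 : (0 < P)%N := period_gt0 m_gt0 n_gt0.
have lP : (l <= P)%N := leq_period m_gt0 (ltn_ord l).
set e := eps ^+ l; have e_neq0 : e != 0 by rewrite expf_neq0 // expi_neq0.
rewrite /HTF /=; set s : 'I_P -> U := Pi_stack (delta l u).
have s_rot : rot l s = Pi_stack (delta 0 u) := Pi_stack_delta_rot l u (dvdn_period m n) P_gt0.
set x := resolvent (toeplitz A) z (toeplitz B s).
rewrite -s_rot toeplitz_rot // resolvent_rot // toeplitzZ // !toeplitz_rot // vatZ -/x -/e.
congr (_ *: _); under [in RHS]eq_fun do rewrite scalerA divfK //.
by rewrite -rot_linearP; apply: Pi_adj_rot; rewrite nbar_gt0.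
Qed.

End HarmonicShift.

Section Refinement.
Variables (R : realType) (q Pt P : nat).
Hypotheses (q_gt0 : (0 < q)%N) (Pt_gt0 : (0 < Pt)%N) (P_eq : P = (q * Pt)%N).

Let P_gt0 : (0 < P)%N. Proof. by rewrite P_eq muln_gt0 q_gt0. Qed.

Let q_dvd_P : (q %| P)%N. Proof. by rewrite P_eq dvdn_mulr. Qed.

Lemma fourier_refine (V W : normedModType R[i]) (A : nat -> V -> W) k x :
  Defs.periodic Pt A ->
  fourier P A k x = if (q %| k)%N then fourier Pt A (k %/ q) x else 0.
Proof.
move=> A_per; have qR : (q%:R : R) != 0 by rewrite pnatr_eq0 -lt0n.
have PtR : (Pt%:R : R) != 0 by rewrite pnatr_eq0 -lt0n.
pose w : R[i] := expi (- (2 * pi * k%:R / q%:R)).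
pose e (t : nat) : R[i] := expi (- (2 * pi * (t * k)%:R / (q * Pt)%:R)).
rewrite P_eq /fourier (sum_ord_mul q Pt (fun t => e t *: A t x)).
transitivity ((q * Pt)%:R^-1 *: \sum_(t < Pt) (\sum_(s < q) w ^+ s) * e t *: A t x).
  congr (_ *: _); rewrite exchange_big /=; apply: eq_bigr => t _.
  rewrite mulr_suml scaler_suml; apply: eq_bigr => s _.
  rewrite (periodic_addmul s t A_per) /w /e expiX -expiD; congr (expi _ *: _).
  by rewrite !natrM natrD !natrM; field; rewrite qR PtR.
rewrite /w sum_unity_root_powers //; case: ifP => q_dvd_k; last first.
  by rewrite big1 ?scaler0 // => t _; rewrite mul0r scale0r.
rewrite !scaler_sumr; apply: eq_bigr => t _; rewrite /e !scalerA; congr (_ *: _).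
have -> : - (2 * pi * (t * k)%:R / (q * Pt)%:R) = - (2 * pi * (t * (k %/ q))%:R / Pt%:R) :> R.
  by rewrite -{1}(divnK q_dvd_k) !natrM; field; rewrite qR PtR.
have qC : (q%:R : R[i]) != 0 by rewrite pnatr_eq0 -lt0n.
have PtC : (Pt%:R : R[i]) != 0 by rewrite pnatr_eq0 -lt0n.
by rewrite natrM; field; rewrite qC PtC.
Qed.

Lemma toeplitz_upsample (V W : normedModType R[i]) (A : nat -> V -> W) (v : 'I_Pt -> V) :
  Defs.periodic Pt A -> (forall t, linear (A t)) ->
  toeplitz (T:=P) A (upsample q v) = upsample q (toeplitz (T:=Pt) A v).
Proof.
move=> A_per A_lin; apply: funext => r; rewrite /toeplitz /upsample.
pose G l := fourier P A ((r + P - l) %% P) (vat v (l %/ q)).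
transitivity (\sum_(l < P) (if (q %| l)%N then G l else 0)).
  by apply: eq_bigr => l _; case: ifP => // _; rewrite fourier0.
rewrite (sum_dvdn_eq G q_gt0 P_eq).
have le_jq (j : 'I_Pt) : (j * q <= r + P)%N.
  by rewrite (leq_trans _ (leq_addl _ _)) // P_eq mulnC leq_pmul2l // ltnW.
case: ifP => q_dvd_r.
  have lt_rq : (r %/ q < Pt)%N by rewrite ltn_divLR // mulnC -P_eq.
  rewrite (vat_ltn _ lt_rq); apply: eq_bigr => j _.
  rewrite /G mulnK // vat_ord fourier_refine // dvdn_modnB_l ?dvdn_mull //.
  by rewrite (divn_modnB_mul q_gt0 q_dvd_r P_eq).
apply: big1 => j _.
by rewrite /G fourier_refine // dvdn_modnB_r ?dvdn_mull ?q_dvd_r.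
Qed.

Lemma toeplitz_projq (V W : normedModType R[i]) (A : nat -> V -> W) (y : 'I_P -> V) :
  Defs.periodic Pt A -> (forall t, linear (A t)) ->
  toeplitz (T:=P) A (projq q y) = projq q (toeplitz (T:=P) A y).
Proof.
move=> A_per A_lin; apply: funext => r; rewrite /toeplitz /projq.
have le_l (l : 'I_P) : (l <= r + P)%N by rewrite (leq_trans (ltnW (ltn_ord l))) // leq_addl.
case: ifP => q_dvd_r.
  apply: eq_bigr => l _; case: ifP => q_dvd_l //.
  by rewrite fourier0 // fourier_refine // dvdn_modnB_l ?q_dvd_l.
apply: big1 => l _; case: ifP => q_dvd_l; last exact: fourier0.
by rewrite fourier_refine // dvdn_modnB_r ?q_dvd_r.
Qed.

Lemma pencil_upsample (X : normedModType R[i]) (A : nat -> X -> X) z (v : 'I_Pt -> X) :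
  Defs.periodic Pt A -> (forall t, linear (A t)) ->
  pencil (toeplitz (T:=P) A) z (upsample q v) = upsample q (pencil (toeplitz (T:=Pt) A) z v).
Proof.
move=> A_per A_lin; rewrite /pencil toeplitz_upsample //; apply: funext => r.
rewrite /upsample; case: ifP => q_dvd_r; last by rewrite !scaler0 subr0.
have lt_rq : (r %/ q < Pt)%N by rewrite ltn_divLR // mulnC -P_eq.
rewrite !(vat_ltn _ lt_rq) /=; congr (_ *: _ - _); congr expi.
have qR : (q%:R : R) != 0 by rewrite pnatr_eq0 -lt0n.
have PtR : (Pt%:R : R) != 0 by rewrite pnatr_eq0 -lt0n.
by rewrite -{1}(divnK q_dvd_r) [in P%:R]P_eq !natrM; field; rewrite qR PtR.
Qed.

Lemma pencil_projq (X : normedModType R[i]) (A : nat -> X -> X) z (y : 'I_P -> X) :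
  Defs.periodic Pt A -> (forall t, linear (A t)) ->
  pencil (toeplitz A) z (projq q y) = projq q (pencil (toeplitz A) z y).
Proof.
move=> A_per A_lin; rewrite /pencil toeplitz_projq //; apply: funext => r.
by rewrite /projq; case: ifP => // _; rewrite !scaler0 subr0.
Qed.

Lemma rho_refine (X : normedModType R[i]) (A : nat -> X -> X) z :
  Defs.periodic Pt A -> (forall t, linear (A t)) ->
  rho (toeplitz (T:=P) A) z -> rho (toeplitz (T:=Pt) A) z.
Proof.
move=> A_per A_lin [Rinv [[Rinv_lin [M Rinv_bdd]] [pencilK RinvK]]].
have downK (v : 'I_Pt -> X) : downsample q (upsample (M:=P) q v) = v.
  by apply: downsample_upsample; rewrite // P_eq mulnC.
have upK (y : 'I_P -> X) : upsample q (downsample (N:=Pt) q y) = projq q y.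
  by apply: upsample_downsample; rewrite // P_eq mulnC.
have Rinv_projq (v : 'I_Pt -> X) : projq q (Rinv (upsample q v)) = Rinv (upsample q v).
  by rewrite -[LHS]RinvK pencil_projq // pencilK -upK downK.
exists (fun v => downsample (N:=Pt) q (Rinv (upsample (M:=P) q v))); split; [split|split].
- by move=> c v w; rewrite upsample_linearP Rinv_lin downsample_linearP.
- exists M => v j; rewrite /downsample.
  have lt_qj : (q * j < P)%N by rewrite P_eq ltn_pmul2l.
  rewrite (vat_ltn _ lt_qj) -(sum_upsample (F := fun x : X => `|x|) v q_gt0 P_eq) ?normr0 //.
  exact: Rinv_bdd.
- by move=> v; rewrite -[LHS]downK -pencil_upsample // upK Rinv_projq pencilK downK.
- by move=> v; rewrite -(pencil_upsample z v A_per A_lin) RinvK downK.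
Qed.

Lemma resolvent_upsample (X : normedModType R[i]) (A : nat -> X -> X) z (b : 'I_Pt -> X) :
  Defs.periodic Pt A -> (forall t, linear (A t)) -> rho (toeplitz (T:=P) A) z ->
  resolvent (toeplitz (T:=P) A) z (upsample q b) =
  upsample q (resolvent (toeplitz (T:=Pt) A) z b).
Proof.
move=> A_per A_lin hz; apply: resolvent_unique => //.
by rewrite pencil_upsample // resolvent_pencil //; apply: rho_refine.
Qed.

Lemma Pi_stack_upsample (V : zmodType) (n nt : nat) (u : 'I_nt -> V) :
  (0 < nt)%N -> n = (q * nt)%N -> (nt %| Pt)%N ->
  Pi_stack (N:=n) (M:=P) (upsample (M:=n) q u) = upsample q (Pi_stack (N:=nt) (M:=Pt) u).
Proof.
move=> nt_gt0 n_eq nt_dvd_Pt; apply: funext => r.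
have n_gt0 : (0 < n)%N by rewrite n_eq muln_gt0 q_gt0.
have q_dvd_n : (q %| n)%N by rewrite n_eq dvdn_mulr.
rewrite /Pi_stack /upsample (vat_ltn _ (ltn_pmod _ n_gt0)) /= dvdn_modn //.
case: ifP => // q_dvd_r.
have lt_rq : (r %/ q < Pt)%N by rewrite ltn_divLR // mulnC -P_eq.
by rewrite (vat_ltn _ lt_rq) /= modn_divl n_eq mulnC.
Qed.

Lemma Pi_adj_upsample (V : zmodType) (m mt Nb : nat) (w : 'I_Pt -> V) :
  m = (q * mt)%N -> Pt = (mt * Nb)%N ->
  Pi_adj (N:=m) Nb (upsample (M:=P) q w) = upsample q (Pi_adj (N:=mt) Nb w).
Proof.
move=> m_eq Pt_eq; apply: funext => k; rewrite /upsample /Pi_adj.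
have q_dvd_m : (q %| m)%N by rewrite m_eq dvdn_mulr.
have lt_k (s : 'I_Nb) : (k + s * m < P)%N.
  by rewrite P_eq Pt_eq mulnA -m_eq ltn_addmul.
case: ifP => q_dvd_k; last first.
  by rewrite big1 // => s _; rewrite (vat_ltn _ (lt_k s)) /= dvdn_addl ?q_dvd_k // dvdn_mull.
have lt_kq : (k %/ q < mt)%N by rewrite ltn_divLR // mulnC -m_eq.
rewrite (vat_ltn _ lt_kq) /=; apply: eq_bigr => s _.
rewrite (vat_ltn _ (lt_k s)) /= dvdn_addr ?q_dvd_k ?dvdn_mull //.
by rewrite divnDl // [in (s * m)%N]m_eq mulnCA mulKn.
Qed.

End Refinement.

Lemma multirate_linear (R : realType) (U X Y : normedModType R[i]) (m n : nat)
    (A : nat -> X -> X) (B : nat -> U -> X) (C : nat -> X -> Y) (D : nat -> U -> Y) :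
  multirate_system m n A B C D ->
  [/\ forall t, linear (A t), forall t, linear (B t),
      forall t, linear (C t) & forall t, linear (D t)].
Proof.
case=> _ [_ [_ [_ [_ [_ [bA [bB [bC bD]]]]]]]].
by split=> t; [case: (bA t) | case: (bB t) | case: (bC t) | case: (bD t)].
Qed.

Section HarmonicRefinement.
Variables (R : realType) (U X Y : normedModType R[i]).
Variables (A : nat -> X -> X) (B : nat -> U -> X) (C : nat -> X -> Y) (D : nat -> U -> Y).

Lemma rho_multirate_refine (M N m n q : nat) z :
  (0 < q)%N -> M = (q * m)%N -> N = (q * n)%N -> multirate_system m n A B C D ->
  rho (toeplitz (T:=(M * nbar M N)%N) A) z -> rho (toeplitz (T:=(m * nbar M N)%N) A) z.
Proof.
move=> q_gt0 -> -> sys; have [m_gt0 [n_gt0 [A_per _]]] := sys.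
have [A_lin _ _ _] := multirate_linear sys.
have Pt_gt0 : (0 < m * nbar m n)%N := period_gt0 m_gt0 n_gt0.
have P_eq : (q * m * nbar m n = q * (m * nbar m n))%N by rewrite mulnA.
by rewrite nbar_mull //; apply: (rho_refine q_gt0 Pt_gt0 P_eq).
Qed.

Lemma HTF_upsample (M N m n q : nat) z (u : 'I_n -> U) :
  (0 < q)%N -> M = (q * m)%N -> N = (q * n)%N -> multirate_system m n A B C D ->
  rho (toeplitz (T:=(M * nbar M N)%N) A) z ->
  HTF M N A B C D z (upsample q u) = upsample q (HTF m n A B C D z u).
Proof.
move=> q_gt0 -> -> sys; have [m_gt0 [n_gt0 [A_per [B_per [C_per [D_per _]]]]]] := sys.
have [A_lin B_lin C_lin D_lin] := multirate_linear sys.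
have Pt_gt0 : (0 < m * nbar m n)%N := period_gt0 m_gt0 n_gt0.
have P_eq : (q * m * nbar m n = q * (m * nbar m n))%N by rewrite mulnA.
rewrite /HTF mbar_mull // nbar_mull // => hz /=.
rewrite (Pi_stack_upsample q_gt0 P_eq u n_gt0 (erefl _) (dvdn_period m n)).
have toeplitz_up := toeplitz_upsample q_gt0 Pt_gt0 P_eq.
rewrite toeplitz_up // (resolvent_upsample q_gt0 Pt_gt0 P_eq) // !toeplitz_up //.
by rewrite -upsample_linearP (Pi_adj_upsample q_gt0 P_eq _ (erefl _) (erefl _)) upsampleZ.
Qed.

End HarmonicRefinement.

Theorem theorem8 (R : realType) (U X Y : completeNormedModType R[i])
  (ipU : U -> U -> R[i]) (ipX : X -> X -> R[i]) (ipY : Y -> Y -> R[i])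
  (hU : inner_product ipU) (hX : inner_product ipX) (hY : inner_product ipY)
  (sU : separable U) (sX : separable X) (sY : separable Y)
  (m n : nat) (A : nat -> X -> X) (B : nat -> U -> X) (C : nat -> X -> Y) (D : nat -> U -> Y) :
  multirate_system m n A B C D ->
  let P := (m * nbar m n)%N in
  let eps : R[i] := expi (2 * pi / P%:R) in
  (* part 1 *)
  (forall z : R[i], rho (toeplitz (T:=P) A) z ->
     forall (k : 'I_m) (l : 'I_n) (u : U),
       rho (toeplitz (T:=P) A) (z / eps ^+ l) /\
       HTF m n A B C D z (delta l u) k
         = vat (HTF m n A B C D (z / eps ^+ l) (delta 0 u)) ((k + m * l - l) %% m)) /\
  (* part 2 *)
  (forall ct : nat, (0 < ct)%N -> (ct %| gcdn m n)%N ->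
     let mt := (ct * mbar m n)%N in
     let nt := (ct * nbar m n)%N in
     let q := (gcdn m n %/ ct)%N in
     multirate_system mt nt A B C D ->
     (forall z : R[i], rho (toeplitz (T:=P) A) z -> rho (toeplitz (T:=(mt * nbar m n)%N) A) z) /\
     (forall z : R[i], rho (toeplitz (T:=P) A) z ->
        (forall u : 'I_nt -> U,
           HTF m n A B C D z (upsample q u) = upsample q (HTF mt nt A B C D z u)) /\
        (forall u : 'I_nt -> U,
           HTF mt nt A B C D z u = downsample q (HTF m n A B C D z (upsample q u))))).
Proof.
move=> sys P eps; have [m_gt0 [n_gt0 _]] := sys.
have [A_lin _ C_lin _] := multirate_linear sys.
split=> [z hz k l u | ct ct_gt0 ct_dvd mt nt q syst].
  have P_gt0 : (0 < P)%N := period_gt0 m_gt0 n_gt0.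
  have lP : (l <= P)%N := leq_period m_gt0 (ltn_ord l).
  by split; [apply: rho_rot | apply: HTF_delta].
have q_gt0 : (0 < q)%N by rewrite divn_gt0 // dvdn_leq // gcdn_gt0 m_gt0.
have gcd_eq : gcdn m n = (q * ct)%N by rewrite divnK.
have m_eq : m = (q * mt)%N by rewrite /mt mulnA -gcd_eq /mbar mulnC divnK // dvdn_gcdl.
have n_eq : n = (q * nt)%N by rewrite /nt mulnA -gcd_eq /nbar mulnC divnK // dvdn_gcdr.
split=> [z | z hz]; first exact: rho_multirate_refine q_gt0 m_eq n_eq syst.
have HTF_up u := HTF_upsample u q_gt0 m_eq n_eq syst hz.
split=> u; first exact: HTF_up.
by rewrite HTF_up downsample_upsample // m_eq mulnC.
Qed.
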